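(* If $t$ is a positive integer multiple of $3$, then there is no nonzero $z\in\mathcal O_{\mathbb{Q}(\sqrt{-3})}$ that is $2$-powerfully unitarily $t$-perfect, i.e. with $I_2^*(z)=t$.
   Context: $\mathcal O_{\mathbb{Q}(\sqrt{-3})}=\mathbb{Z}[\frac{1+\sqrt{-3}}{2}]$ is a unique factorization domain. $|z|=\sqrt{z\bar z}$, $\arg(z)\in[0,2\pi)$. Let $A$ be the set of nonzero $z\in\mathcal O_{\mathbb{Q}(\sqrt{-3})}$ with $0\le \arg(z)<\pi/3$. Two elements are relatively prime if they have no nonunit common divisor. For nonzero $x,z$, write $x\Diamond z$ iff $x\in A$, $x\mid z$, and $x$ is relatively prime to $z/x$. For $m\in\mathbb{Z}$ define $\delta_m^*(z)=\sum_{x\Diamond z}|x|^m$ and $I_m^*(z)=\delta_m^*(z)/|z|^m$. *)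

(* Eisenstein integers O_{Q(sqrt -3)} = Z[w], w = (1+sqrt(-3))/2,
   represented by coordinate pairs (a, b) standing for a + b*w. *)
From mathcomp Require Import all_boot all_order all_algebra.
From Stdlib Require Import ClassicalEpsilon.
Set Implicit Arguments. Unset Strict Implicit. Unset Printing Implicit Defensive.
Import Order.TTheory GRing.Theory Num.Theory.
Local Open Scope ring_scope.

Definition eis := (int * int)%type.

Definition eis0 : eis := (0, 0).
Definition eis1 : eis := (1, 0).

(* w^2 = w - 1, hence (a+bw)(c+dw) = (ac - bd) + (ad + bc + bd) w *)
Definition eis_mul (x y : eis) : eis :=
  (x.1 * y.1 - x.2 * y.2, x.1 * y.2 + x.2 * y.1 + x.2 * y.2).

(* |a + b w|^2 = (a + b/2)^2 + 3 b^2/4 = a^2 + a b + b^2 *)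
Definition eis_norm (x : eis) : int := x.1 ^+ 2 + x.1 * x.2 + x.2 ^+ 2.

(* a + b w = (a + b/2) + i (b sqrt3 / 2).  For nonzero z,
   0 <= arg z < pi/3  <->  Im z >= 0 /\ Im z < sqrt3 * Re z  <->  b >= 0 /\ a > 0. *)
Definition inA (x : eis) : Prop := 0 < x.1 /\ 0 <= x.2.

Definition eis_dvd (x z : eis) : Prop := exists y, z = eis_mul x y.

Definition eis_unit (u : eis) : Prop := exists v, eis_mul u v = eis1.

Definition eis_rel_prime (x y : eis) : Prop :=
  forall d, eis_dvd d x -> eis_dvd d y -> eis_unit d.

Definition unitary_div (x z : eis) : Prop :=
  x <> eis0 /\ inA x /\ exists y, z = eis_mul x y /\ eis_rel_prime x y.

(* delta_2^*(z) = sum_{x diamond z} |x|^2.  Every x with x diamond z satisfies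
   x = a + b w with 1 <= a, 0 <= b and a^2+ab+b^2 = |x|^2 <= |z|^2 = N, so
   a, b <= N; the sum is taken over this finite box, which contains all such x. *)
Definition delta2_star (z : eis) : int :=
  let N := `|eis_norm z|%N in
  \sum_(a < N.+1) \sum_(b < N.+1)
     (if excluded_middle_informative (unitary_div ((a : nat)%:Z, (b : nat)%:Z) z)
      then eis_norm ((a : nat)%:Z, (b : nat)%:Z) else 0).

Definition I2_star (z : eis) : rat := (delta2_star z)%:~R / (eis_norm z)%:~R.

(* If z = p^e w with p prime not dividing w, the unitary divisors of z in A are
   those of w together with the normalisations of d p^e for d a unitary divisor
   of w; hence delta_2^*(z) = delta_2^*(w) (1 + |p^e|^2), and by induction
   delta_2^*(z) is a product of factors 1 + |q|^2.  A norm a^2 + ab + b^2 is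
   0 or 1 mod 3, so no such factor is divisible by 3, whereas I_2^*(z) = t
   means delta_2^*(z) = t |z|^2. *)

From mathcomp Require Import all_boot all_order all_algebra.
From mathcomp Require Import ring lra zify.
From Stdlib Require Import ClassicalEpsilon.
Set Implicit Arguments. Unset Strict Implicit. Unset Printing Implicit Defensive.
Import Order.TTheory GRing.Theory Num.Theory.
Local Open Scope ring_scope.

Local Notation "x ** y" := (eis_mul x y) (at level 40, left associativity).

Definition eis_conj (x : eis) : eis := (x.1 + x.2, - x.2).

Lemma eis_ext (x y : eis) : x.1 = y.1 -> x.2 = y.2 -> x = y.
Proof. by case: x y => ? ? [? ?] /= -> ->. Qed.

Ltac eis_ring := rewrite /eis_mul /eis_conj /eis_norm /eis1 /eis0 /=;
  try (apply: eis_ext => /=); ring.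

Lemma eis_mulC x y : x ** y = y ** x.
Proof. case: x y => a b [c d]; eis_ring. Qed.

Lemma eis_mulA x y z : x ** (y ** z) = x ** y ** z.
Proof. case: x y z => a b [c d] [e f]; eis_ring. Qed.

Lemma eis_mulCA x y z : x ** (y ** z) = y ** (x ** z).
Proof. by rewrite !eis_mulA (eis_mulC x). Qed.

Lemma eis_mulACA x y z t : x ** y ** (z ** t) = x ** z ** (y ** t).
Proof. by rewrite -!eis_mulA (eis_mulCA y). Qed.

Lemma eis_mul1 x : eis1 ** x = x.
Proof. case: x => a b; eis_ring. Qed.

Lemma eis_mulr1 x : x ** eis1 = x.
Proof. by rewrite eis_mulC eis_mul1. Qed.

Lemma eis_mul0 x : eis0 ** x = eis0.
Proof. case: x => a b; eis_ring. Qed.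

Lemma eis_mulr0 x : x ** eis0 = eis0.
Proof. by rewrite eis_mulC eis_mul0. Qed.

Lemma eis_mulDr x y z : x ** (y + z) = x ** y + x ** z.
Proof. case: x y z => a b [c d] [e f]; eis_ring. Qed.

Lemma eis_mulBr x y z : x ** (y - z) = x ** y - x ** z.
Proof. case: x y z => a b [c d] [e f]; eis_ring. Qed.

Lemma eis_mul_conj x : x ** eis_conj x = (eis_norm x, 0).
Proof. case: x => a b; eis_ring. Qed.

Lemma eis_normM x y : eis_norm (x ** y) = eis_norm x * eis_norm y.
Proof. case: x y => a b [c d]; eis_ring. Qed.

Lemma eis_norm_ge0 x : 0 <= eis_norm x.
Proof. case: x => a b; rewrite /eis_norm /=; nia. Qed.

Lemma eis_norm_eq0 x : (eis_norm x = 0) <-> x = eis0.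
Proof.
split => [|->] //; case: x => a b; rewrite /eis_norm /= => N0.
by apply: eis_ext => /=; nia.
Qed.

Lemma eis_norm_gt0 x : x <> eis0 -> 0 < eis_norm x.
Proof. by move=> x0; rewrite lt_def eis_norm_ge0 andbT; apply/eqP => /eis_norm_eq0. Qed.

Lemma eis_mul_eq0 x y : x ** y = eis0 -> x = eis0 \/ y = eis0.
Proof.
move/eis_norm_eq0/eqP; rewrite eis_normM mulf_eq0.
by case/orP => /eqP /eis_norm_eq0; [left | right].
Qed.

Lemma eis_mul_neq0 x y : x <> eis0 -> y <> eis0 -> x ** y <> eis0.
Proof. by move=> x0 y0 /eis_mul_eq0 []. Qed.

Lemma eis_mulI x y z : x <> eis0 -> x ** y = x ** z -> y = z.
Proof.
move=> x0 xyz; have /eis_mul_eq0 [//|/eqP] : x ** (y - z) = eis0.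
  by rewrite eis_mulBr xyz subrr.
by rewrite subr_eq0 => /eqP.
Qed.

Lemma eis_unitP u : eis_unit u <-> eis_norm u = 1.
Proof.
split=> [[v /(congr1 eis_norm)]|N1]; last by exists (eis_conj u); rewrite eis_mul_conj N1.
rewrite eis_normM (_ : eis_norm eis1 = 1) // => uv1.
have [u0 v0] : eis_norm u <> 0 /\ eis_norm v <> 0.
  by split=> N0; move: uv1; rewrite N0 ?mul0r ?mulr0.
by have := eis_norm_ge0 u; have := eis_norm_ge0 v; nia.
Qed.

Lemma eis_unit1 : eis_unit eis1.
Proof. by exists eis1. Qed.

Lemma eis_unitM u v : eis_unit u -> eis_unit v -> eis_unit (u ** v).
Proof. by rewrite !eis_unitP eis_normM => -> ->. Qed.

Lemma eis_unit_inv u v : u ** v = eis1 -> eis_unit v.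
Proof. by exists u; rewrite eis_mulC. Qed.

Lemma eis_unit_neq0 u : eis_unit u -> u <> eis0.
Proof. by move/eis_unitP => Nu1 u0; move: Nu1; rewrite u0. Qed.

Lemma eis_norm_nonunit x : x <> eis0 -> ~ eis_unit x -> 1 < eis_norm x.
Proof.
move=> x0 xU; have := eis_norm_gt0 x0.
have : eis_norm x <> 1 by move/eis_unitP.
lia.
Qed.

Lemma eis_dvd_refl x : eis_dvd x x.
Proof. by exists eis1; rewrite eis_mulr1. Qed.

Lemma eis_dvd_trans y x z : eis_dvd x y -> eis_dvd y z -> eis_dvd x z.
Proof. by move=> [a ->] [b ->]; exists (a ** b); rewrite eis_mulA. Qed.

Lemma eis_dvd_mulr d m n : eis_dvd d m -> eis_dvd d (m ** n).
Proof. by move=> [a ->]; exists (a ** n); rewrite eis_mulA. Qed.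

Lemma eis_dvd_mull d m n : eis_dvd d n -> eis_dvd d (m ** n).
Proof. by rewrite eis_mulC; apply: eis_dvd_mulr. Qed.

Lemma eis_dvdD d m n : eis_dvd d m -> eis_dvd d n -> eis_dvd d (m + n).
Proof. by move=> [a ->] [b ->]; exists (a + b); rewrite eis_mulDr. Qed.

Lemma eis_dvd0 d : eis_dvd d eis0.
Proof. by exists eis0; rewrite eis_mulr0. Qed.

Lemma eis_dvd_mul2l d x y : d <> eis0 -> eis_dvd (d ** x) (d ** y) -> eis_dvd x y.
Proof. by move=> d0 [k dyk]; exists k; apply: (eis_mulI d0); rewrite dyk eis_mulA. Qed.

Lemma eis_unit_dvd d u : eis_unit u -> eis_dvd d u -> eis_unit d.
Proof. by move=> [v uv1] [k udk]; exists (k ** v); rewrite eis_mulA -udk. Qed.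

Lemma eis_dvd_unit_mull d u y : eis_unit u -> eis_dvd d (u ** y) -> eis_dvd d y.
Proof.
by move=> [v uv1] /(eis_dvd_mull v); rewrite eis_mulA (eis_mulC v) uv1 eis_mul1.
Qed.

Lemma eis_dvd_norm x y : y <> eis0 -> eis_dvd x y -> eis_norm x <= eis_norm y.
Proof.
move=> y0 [k yxk]; have k0 : k <> eis0 by move=> k0; apply: y0; rewrite yxk k0 eis_mulr0.
have := eis_norm_gt0 k0; have := eis_norm_ge0 x; rewrite yxk eis_normM; nia.
Qed.

Lemma divz_nearest (m n : int) : 0 < n -> exists q, - n <= 2 * (m - q * n) < n.
Proof.
move=> n_gt0; exists ((2 * m + n) %/ (2 * n))%Z.
have n2_gt0 : 0 < 2 * n by lia.
have := divz_eq (2 * m + n) (2 * n); have := ltz_pmod (2 * m + n) n2_gt0.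
have := modz_ge0 (2 * m + n) (lt0r_neq0 n2_gt0).
move: ((2 * m + n) %/ (2 * n))%Z ((2 * m + n) %% (2 * n))%Z => q r; lia.
Qed.

(* Rounding both coordinates of x * conj y / N(y) to the nearest integer leaves a
   remainder of norm at most 3/4 N(y). *)
Lemma eis_divmod x y : y <> eis0 ->
  exists q r, x = q ** y + r /\ eis_norm r < eis_norm y.
Proof.
move=> y0; have Ny_gt0 := eis_norm_gt0 y0.
set m := x ** eis_conj y.
have [q1 hq1] := divz_nearest m.1 Ny_gt0; have [q2 hq2] := divz_nearest m.2 Ny_gt0.
exists (q1, q2), (x - (q1, q2) ** y); split; first by rewrite addrC subrK.
have Nr : eis_norm (x - (q1, q2) ** y) * eis_norm y =
  (m.1 - q1 * eis_norm y) ^+ 2 + (m.1 - q1 * eis_norm y) * (m.2 - q2 * eis_norm y)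
  + (m.2 - q2 * eis_norm y) ^+ 2.
  by rewrite /m; case: x y {y0 Ny_gt0 m hq1 hq2} => a b [c d]; eis_ring.
move: Nr hq1 hq2 Ny_gt0 (eis_norm_ge0 (x - (q1, q2) ** y)).
move: (eis_norm _) (eis_norm y) (m.1 - _) (m.2 - _) => R n u v; nia.
Qed.

Lemma eis_norm_ind (P : eis -> Prop) :
  (forall x, (forall y, eis_norm y < eis_norm x -> P y) -> P x) -> forall x, P x.
Proof.
move=> IH x; have [n] := ubnP `|eis_norm x|%N; elim: n x => // n IHn x Nx.
by apply: IH => y Ny; apply: IHn; have := eis_norm_ge0 y; lia.
Qed.

Lemma eis_bezout x y :
  exists g s t, [/\ eis_dvd g x, eis_dvd g y & g = s ** x + t ** y].
Proof.
elim/eis_norm_ind: y x => y IH x.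
have [->|/eqP y0] := eqVneq y eis0.
  exists x, eis1, eis0; split; [exact: eis_dvd_refl | exact: eis_dvd0 |].
  by rewrite eis_mul1 eis_mul0 addr0.
have [q [r [xE Nr]]] := eis_divmod x y0.
have [g [s [t [gy gr gE]]]] := IH r Nr y.
exists g, t, (s - t ** q); split => //.
  by rewrite xE; apply: eis_dvdD => //; apply: eis_dvd_mull.
rewrite gE xE; case: q r s t {xE Nr gy gr gE IH y0} => ? ? [? ?] [? ?] [? ?]; eis_ring.
Qed.

Definition eis_irred (p : eis) := [/\ p <> eis0, ~ eis_unit p &
  forall c d, p = c ** d -> eis_unit c \/ eis_unit d].

Definition eis_prime (p : eis) := [/\ p <> eis0, ~ eis_unit p &
  forall a b, eis_dvd p (a ** b) -> eis_dvd p a \/ eis_dvd p b].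

Lemma eis_irred_prime p : eis_irred p -> eis_prime p.
Proof.
case=> p0 pU p_irr; split => // a b pab.
have [pa | npa] := classic (eis_dvd p a); [by left | right].
have [g [s [t [[c pE] ga gE]]]] := eis_bezout p a.
case: (p_irr g c pE) => [[h gh1] | [h ch1]]; last first.
  by case: npa; apply: eis_dvd_trans ga; exists h; rewrite pE -eis_mulA ch1 eis_mulr1.
have pbg : eis_dvd p (b ** g).
  rewrite gE eis_mulDr; apply: eis_dvdD.
    by do 2!apply: eis_dvd_mull; apply: eis_dvd_refl.
  by rewrite eis_mulCA eis_mulC; apply: eis_dvd_mulr; rewrite eis_mulC.
by move: (eis_dvd_mulr h pbg); rewrite -eis_mulA gh1 eis_mulr1.
Qed.

Lemma eis_prime_dvd_exists z : z <> eis0 -> ~ eis_unit z ->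
  exists2 p, eis_prime p & eis_dvd p z.
Proof.
elim/eis_norm_ind: z => z IH z0 zU.
have [z_irr | z_red] := classic (eis_irred z).
  by exists z; [apply: eis_irred_prime | apply: eis_dvd_refl].
have [c [d [zE cU dU]]] : exists c d, [/\ z = c ** d, ~ eis_unit c & ~ eis_unit d].
  apply: NNPP => nfact; apply: z_red; split => // c d zE.
  by apply: NNPP => nU; apply: nfact; exists c, d; split => // ?; apply: nU; auto.
have [c0 d0] : c <> eis0 /\ d <> eis0.
  by split=> E; apply: z0; rewrite zE E ?eis_mul0 ?eis_mulr0.
have Nc : eis_norm c < eis_norm z.
  have := eis_norm_nonunit d0 dU; have := eis_norm_gt0 c0.
  by rewrite zE eis_normM; nia.
have [p pP pc] := IH c Nc c0 cU.
by exists p => //; rewrite zE; apply: eis_dvd_mulr.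
Qed.

Lemma eis_rel_prime_by_primes x y : x <> eis0 ->
  (forall r, eis_prime r -> eis_dvd r x -> ~ eis_dvd r y) -> eis_rel_prime x y.
Proof.
move=> x0 no_common d dx dy; apply: NNPP => dU.
have d0 : d <> eis0 by move=> d0; apply: x0; case: dx => k ->; rewrite d0 eis_mul0.
have [r rP rd] := eis_prime_dvd_exists d0 dU.
by apply: (no_common r rP); apply: eis_dvd_trans rd _.
Qed.

Definition eis_exp (p : eis) (e : nat) : eis := iter e (eis_mul p) eis1.

Lemma eis_exp_neq0 p e : p <> eis0 -> eis_exp p e <> eis0.
Proof. by move=> p0; elim: e => [|e IH] //=; apply: eis_mul_neq0. Qed.

Lemma eis_dvd_exp p e : (0 < e)%N -> eis_dvd p (eis_exp p e).
Proof. by case: e => // e _; apply: eis_dvd_mulr; apply: eis_dvd_refl. Qed.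

Section PrimePowers.

Variable p : eis.
Hypothesis pP : eis_prime p.

Lemma eis_prime_neq0 : p <> eis0. Proof. by case: pP. Qed.

Lemma eis_prime_nonunit : ~ eis_unit p. Proof. by case: pP. Qed.

Lemma eis_prime_dvdM a b : eis_dvd p (a ** b) -> eis_dvd p a \/ eis_dvd p b.
Proof. by case: pP => _ _; apply. Qed.

Lemma eis_prime_dvd_exp r e : eis_prime r -> eis_dvd r (eis_exp p e) -> eis_dvd p r.
Proof.
case=> r0 rU r_prime; elim: e => [/(eis_unit_dvd eis_unit1) // | e IH /=].
case/r_prime => [[c pE] | /IH //].
have [// | [k cE]] : eis_dvd p r \/ eis_dvd p c.
  by apply: eis_prime_dvdM; rewrite -pE; apply: eis_dvd_refl.
case: rU; exists k; apply: (eis_mulI eis_prime_neq0).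
by rewrite eis_mulr1 eis_mulCA -cE -pE.
Qed.

Lemma eis_exp_dvd_coprime e x y :
  eis_dvd (eis_exp p e) (x ** y) -> ~ eis_dvd p y -> eis_dvd (eis_exp p e) x.
Proof.
elim: e x => [|e IH] x /= pxy npy; first by exists x; rewrite eis_mul1.
have [[x' xE] | //] := eis_prime_dvdM (eis_dvd_trans (eis_dvd_mulr _ (eis_dvd_refl p)) pxy).
have /IH /(_ npy) [k x'E] : eis_dvd (eis_exp p e) (x' ** y).
  by apply: (eis_dvd_mul2l eis_prime_neq0); rewrite eis_mulA -xE.
by exists k; rewrite xE x'E eis_mulA.
Qed.

Lemma eis_prime_power_split z : z <> eis0 -> eis_dvd p z ->
  exists e w, [/\ (0 < e)%N, z = eis_exp p e ** w & ~ eis_dvd p w].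
Proof.
elim/eis_norm_ind: z => z IH z0 [z1 zE].
have z10 : z1 <> eis0 by move=> E; apply: z0; rewrite zE E eis_mulr0.
have [pz1 | npz1] := classic (eis_dvd p z1); last first.
  by exists 1%N, z1; split => //=; rewrite eis_mulr1.
have Nz1 : eis_norm z1 < eis_norm z.
  have := eis_norm_nonunit eis_prime_neq0 eis_prime_nonunit; have := eis_norm_gt0 z10.
  by rewrite zE eis_normM; nia.
have [e [w [e_gt0 z1E npw]]] := IH z1 Nz1 z10 pz1.
by exists e.+1, w; split => //=; rewrite zE z1E eis_mulA.
Qed.

End PrimePowers.

(* The units 1, 1 - w, -w, -1, w - 1, w rotate the six sectors of angle pi/3 onto A. *)
Definition eis_normal_unit (x : eis) : eis :=
  let: (a, b) := x in
  if (0 < a) && (0 <= b) then (1, 0)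
  else if (a <= 0) && (0 < a + b) then (1, -1)
  else if (0 < b) && (a + b <= 0) then (0, -1)
  else if (a < 0) && (b <= 0) then (-1, 0)
  else if (0 <= a) && (a + b < 0) then (-1, 1)
  else (0, 1).

Definition eis_normalize (x : eis) : eis := eis_normal_unit x ** x.

Lemma eis_normal_unit_unit x : eis_unit (eis_normal_unit x).
Proof. by apply/eis_unitP; case: x => a b /=; repeat case: ifP. Qed.

Lemma eis_normalize_inA x : x <> eis0 -> inA (eis_normalize x).
Proof.
case: x => a b x0; have ab0 : (a != 0) || (b != 0).
  by rewrite -negb_and; apply/andP => -[/eqP a0 /eqP b0]; apply: x0; rewrite a0 b0.
rewrite /eis_normalize /inA /eis_mul /=.
by repeat (case: ifP => /= [/andP [] |]); lia.
Qed.

Lemma eis_norm_normalize x : eis_norm (eis_normalize x) = eis_norm x.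
Proof. by rewrite eis_normM (eis_unitP _).1 ?mul1r //; apply: eis_normal_unit_unit. Qed.

Lemma inA_neq0 x : inA x -> x <> eis0.
Proof. by case=> x1_gt0 _ x0; move: x1_gt0; rewrite x0. Qed.

(* A unit has coordinates in {-1, 0, 1}; checking the nine cases, only 1 maps A into A. *)
Lemma inA_unit_eq1 x u : inA x -> eis_unit u -> inA (u ** x) -> u = eis1.
Proof.
case: x u => a b [c d] [/= a_gt0 b_ge0] /eis_unitP; rewrite /eis_norm /= => Nu1.
have c3 : c = -1 \/ c = 0 \/ c = 1 by nia.
have d3 : d = -1 \/ d = 0 \/ d = 1 by nia.
rewrite /inA /eis_mul /eis1 /=; move: Nu1.
by case: c3 => [|[|]] ->; case: d3 => [|[|]] -> //= _ []; lia.
Qed.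

Lemma eis_normalize_id x : inA x -> eis_normalize x = x.
Proof.
move=> xA; have := eis_normalize_inA (inA_neq0 xA).
move/(inA_unit_eq1 xA (eis_normal_unit_unit x)).
by rewrite /eis_normalize => ->; rewrite eis_mul1.
Qed.

Lemma eis_normalize_unitM u x : eis_unit u -> eis_normalize (u ** x) = eis_normalize x.
Proof.
move=> uU; have [->|/eqP x0] := eqVneq x eis0; first by rewrite /eis_normalize !eis_mulr0.
have [v nv1] := eis_normal_unit_unit x.
have xE : x = v ** eis_normalize x by rewrite eis_mulA (eis_mulC v) nv1 eis_mul1.
set n := eis_normal_unit (u ** x).
have nE : eis_normalize (u ** x) = n ** u ** v ** eis_normalize x.
  by rewrite /eis_normalize -/n {1}xE !eis_mulA.
have nuvU : eis_unit (n ** u ** v).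
  by do !apply: eis_unitM => //; [apply: eis_normal_unit_unit | apply: eis_unit_inv nv1].
have nxA := eis_normalize_inA x0.
have uxA := eis_normalize_inA (eis_mul_neq0 (eis_unit_neq0 uU) x0).
by rewrite nE (inA_unit_eq1 nxA nuvU) ?eis_mul1 // -nE.
Qed.

Lemma eis_normalize_mulr_inj q d1 d2 : q <> eis0 -> inA d1 -> inA d2 ->
  eis_normalize (d1 ** q) = eis_normalize (d2 ** q) -> d1 = d2.
Proof.
rewrite /eis_normalize => q0 d1A d2A.
set u1 := eis_normal_unit (d1 ** q); set u2 := eis_normal_unit (d2 ** q) => E.
have {}E : u1 ** d1 = u2 ** d2.
  by apply: (eis_mulI q0); rewrite !(eis_mulCA q) !(eis_mulC q).
have [v u2v] := eis_normal_unit_unit (d2 ** q); rewrite -/u2 in u2v.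
have d2E : d2 = v ** u1 ** d1 by rewrite -eis_mulA E eis_mulA (eis_mulC v) u2v eis_mul1.
have vu1U : eis_unit (v ** u1).
  by apply: eis_unitM; [apply: eis_unit_inv u2v | apply: eis_normal_unit_unit].
by rewrite -(eis_normalize_id d1A) -(eis_normalize_id d2A) d2E eis_normalize_unitM.
Qed.

Definition is_unitary_div (z : eis) : pred eis :=
  fun x => if excluded_middle_informative (unitary_div x z) then true else false.

Lemma is_unitary_divP z x : reflect (unitary_div x z) (is_unitary_div z x).
Proof. by rewrite /is_unitary_div; case: excluded_middle_informative => h; constructor. Qed.

Definition box (K : nat) : seq eis :=
  [seq ((a : nat)%:Z, (b : nat)%:Z) | a <- index_iota 0 K.+1, b <- index_iota 0 K.+1].

Lemma box_uniq K : uniq (box K).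
Proof. by apply: allpairs_uniq; rewrite ?iota_uniq // => -[a b] [c d] _ _ [/= -> ->]. Qed.

Lemma mem_box K (a b : int) : 0 <= a <= K%:Z -> 0 <= b <= K%:Z -> (a, b) \in box K.
Proof.
move=> a_bd b_bd; apply/allpairsP; exists (`|a|%N, `|b|%N).
by rewrite !mem_index_iota /=; split; [lia | lia | congr pair; lia].
Qed.

Lemma inA_coord_le_norm (a b : int) :
  inA (a, b) -> a <= eis_norm (a, b) /\ b <= eis_norm (a, b).
Proof. by case=> /= a_gt0 b_ge0; rewrite /eis_norm /=; split; nia. Qed.

Lemma unitary_div_in_box K x z : z <> eis0 -> eis_norm z <= K%:Z ->
  unitary_div x z -> x \in box K.
Proof.
case: x => a b z0 NzK [_ [xA [y [zE _]]]].
have Nx := eis_dvd_norm z0 (ex_intro _ y zE).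
have [a_le b_le] := inA_coord_le_norm xA; case: xA => /= a_gt0 b_ge0.
by apply: mem_box; lia.
Qed.

Lemma big_uniq_support (T : eqType) (s t : seq T) (P : pred T) (F : T -> int) :
  uniq s -> uniq t -> {subset P <= s} -> {subset P <= t} ->
  \sum_(x <- s | P x) F x = \sum_(x <- t | P x) F x.
Proof.
move=> s_uniq t_uniq Ps Pt; rewrite -!(big_filter _ P); apply: perm_big.
apply: uniq_perm; rewrite ?filter_uniq // => x; rewrite !mem_filter.
by case Px: (P x) => //=; rewrite (Ps x Px) (Pt x Px).
Qed.

Lemma delta2_starE K z : z <> eis0 -> eis_norm z <= K%:Z ->
  delta2_star z = \sum_(x <- box K | is_unitary_div z x) eis_norm x.
Proof.
move=> z0 NzK; have Nz : eis_norm z = `|eis_norm z|%N by have := eis_norm_ge0 z; lia.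
have -> : delta2_star z = \sum_(x <- box `|eis_norm z|%N | is_unitary_div z x) eis_norm x.
  rewrite /box big_mkcond big_allpairs_dep /delta2_star.
  rewrite big_mkord; apply: eq_bigr => a _; rewrite big_mkord; apply: eq_bigr => b _.
  by rewrite /is_unitary_div; case: excluded_middle_informative.
apply: big_uniq_support; rewrite ?box_uniq // => x /is_unitary_divP.
  by apply: unitary_div_in_box => //; rewrite -Nz.
exact: unitary_div_in_box.
Qed.

Section UnitaryDivisorsOfPrimePowerMultiple.

Variables (p w : eis) (e : nat).
Hypotheses (pP : eis_prime p) (e_gt0 : (0 < e)%N) (npw : ~ eis_dvd p w).

Let q := eis_exp p e.
Let z := q ** w.
Let q0 : q <> eis0. Proof. exact: eis_exp_neq0 (eis_prime_neq0 pP). Qed.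
Let w0 : w <> eis0. Proof. by move=> w0; apply: npw; rewrite w0; apply: eis_dvd0. Qed.
Let z0 : z <> eis0. Proof. exact: eis_mul_neq0 q0 w0. Qed.

Let norm_w_le_z : eis_norm w <= eis_norm z.
Proof. by rewrite /z eis_normM; have := eis_norm_gt0 q0; have := eis_norm_ge0 w; nia. Qed.

Lemma unitary_div_ndvd_prime x :
  unitary_div x z /\ ~ eis_dvd p x <-> unitary_div x w.
Proof.
split=> [[[x0 [xA [y [zE xy]]]] npx] | [x0 [xA [y [wE xy]]]]].
  have [y' yE] : eis_dvd q y.
    apply: (eis_exp_dvd_coprime pP) npx.
    by rewrite eis_mulC -zE; apply: eis_dvd_mulr; apply: eis_dvd_refl.
  split; [by [] | split; [by [] | exists y'; split]].
    by apply: (eis_mulI q0); rewrite -/z zE yE eis_mulCA.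
  by move=> d dx dy'; apply: xy => //; rewrite yE; apply: eis_dvd_mull.
have npx : ~ eis_dvd p x by move=> px; apply: npw; rewrite wE; apply: eis_dvd_mulr.
split=> //; split; [by [] | split; [by [] | exists (q ** y); split]].
  by rewrite /z wE eis_mulCA.
apply: eis_rel_prime_by_primes => // r rP rx /(eis_prime_dvdM rP) [rq | ry].
  by apply: npx; apply: eis_dvd_trans rx; apply: (eis_prime_dvd_exp pP rP rq).
exact: eis_prime_nonunit rP (xy r rx ry).
Qed.

Lemma unitary_div_dvd_prime d : unitary_div d w ->
  unitary_div (eis_normalize (d ** q)) z /\ eis_dvd p (eis_normalize (d ** q)).
Proof.
move=> [d0 [dA [y [wE dy]]]].
have [v nv1] := eis_normal_unit_unit (d ** q).
have pn : eis_dvd p (eis_normalize (d ** q)).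
  by do 2!apply: eis_dvd_mull; apply: eis_dvd_exp.
split => //; split; [exact: inA_neq0 (eis_normalize_inA (eis_mul_neq0 d0 q0)) |].
split; [exact: eis_normalize_inA (eis_mul_neq0 d0 q0) | exists (v ** y); split].
  by rewrite /z wE /eis_normalize eis_mulACA nv1 eis_mul1 eis_mulCA eis_mulA.
apply: eis_rel_prime_by_primes; first exact: inA_neq0 (eis_normalize_inA (eis_mul_neq0 d0 q0)).
move=> r rP /(eis_dvd_unit_mull (eis_normal_unit_unit _)) /(eis_prime_dvdM rP) [rd | rq].
  move=> /(eis_dvd_unit_mull (eis_unit_inv nv1)) ry.
  exact: eis_prime_nonunit rP (dy r rd ry).
move=> /(eis_dvd_unit_mull (eis_unit_inv nv1)) ry; apply: npw; rewrite wE.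
by apply: eis_dvd_mull; apply: eis_dvd_trans ry; apply: (eis_prime_dvd_exp pP rP rq).
Qed.

Lemma unitary_div_dvd_primeP x : unitary_div x z -> eis_dvd p x ->
  exists2 d, unitary_div d w & x = eis_normalize (d ** q).
Proof.
move=> [x0 [xA [y [zE xy]]]] px.
have npy : ~ eis_dvd p y by move=> py; apply: eis_prime_nonunit pP (xy p px py).
have [d xE] : eis_dvd q x.
  apply: (eis_exp_dvd_coprime pP) npy.
  by rewrite -zE; apply: eis_dvd_mulr; apply: eis_dvd_refl.
have d0 : d <> eis0 by move=> d0; apply: x0; rewrite xE d0 eis_mulr0.
have [v nv1] := eis_normal_unit_unit d.
exists (eis_normalize d).
  split; [exact: inA_neq0 (eis_normalize_inA d0) | split; [exact: eis_normalize_inA |]].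
  exists (v ** y); split.
    apply: (eis_mulI q0); rewrite -/z zE xE /eis_normalize.
    by rewrite eis_mulACA nv1 eis_mul1 eis_mulA.
  move=> f fd fy; apply: xy.
    rewrite xE; apply: eis_dvd_mull.
    exact: eis_dvd_unit_mull (eis_normal_unit_unit d) fd.
  exact: eis_dvd_unit_mull (eis_unit_inv nv1) fy.
rewrite [eis_normalize d]/eis_normalize -eis_mulA eis_normalize_unitM.
  by rewrite eis_mulC -xE eis_normalize_id.
exact: eis_normal_unit_unit.
Qed.

Lemma perm_unitary_div_dvd_prime K : eis_norm z <= K%:Z ->
  perm_eq [seq x <- box K | is_unitary_div z x && ~~ is_unitary_div w x]
          [seq eis_normalize (d ** q) | d <- [seq d <- box K | is_unitary_div w d]].
Proof.
move=> NzK; have NwK := le_trans norm_w_le_z NzK.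
apply: uniq_perm; first by rewrite filter_uniq ?box_uniq.
  rewrite map_inj_in_uniq ?filter_uniq ?box_uniq // => d1 d2.
  rewrite !mem_filter => /andP [/is_unitary_divP [_ [d1A _]] _].
  by move=> /andP [/is_unitary_divP [_ [d2A _]] _]; apply: eis_normalize_mulr_inj q0 d1A d2A.
move=> x; rewrite mem_filter; apply/andP/mapP => [[] | [d]].
  move=> /andP [/is_unitary_divP xz /is_unitary_divP nxw] _.
  have px : eis_dvd p x by apply: NNPP => npx; apply: nxw; apply/unitary_div_ndvd_prime.
  have [d dw ->] := unitary_div_dvd_primeP xz px.
  exists d => //; rewrite mem_filter (unitary_div_in_box w0 NwK dw) andbT.
  exact/is_unitary_divP.
rewrite mem_filter => /andP [/is_unitary_divP dw _] ->.
have [xz px] := unitary_div_dvd_prime dw.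
split; last exact: unitary_div_in_box z0 NzK xz.
apply/andP; split; first by apply/is_unitary_divP.
by apply/negP => /is_unitary_divP /unitary_div_ndvd_prime [].
Qed.

Lemma delta2_star_mul_prime_power : delta2_star z = delta2_star w * (1 + eis_norm q).
Proof.
have NzK : eis_norm z <= `|eis_norm z|%N%:Z by have := eis_norm_ge0 z; lia.
have NwK := le_trans norm_w_le_z NzK.
rewrite (delta2_starE z0 NzK) (delta2_starE w0 NwK) (bigID (is_unitary_div w)) /=.
have -> : \sum_(x <- box `|eis_norm z| | is_unitary_div z x && is_unitary_div w x) eis_norm x
    = \sum_(x <- box `|eis_norm z| | is_unitary_div w x) eis_norm x.
  apply: eq_bigl => x; apply/andP/idP => [[] // | /is_unitary_divP xw].
  by have [xz _] := (unitary_div_ndvd_prime x).2 xw; split; apply/is_unitary_divP.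
rewrite -big_filter (perm_big _ (perm_unitary_div_dvd_prime NzK)) big_map big_filter.
rewrite mulrDr mulr1 big_distrl /=; congr (_ + _); apply: eq_bigr => d _.
by rewrite eis_norm_normalize eis_normM.
Qed.

End UnitaryDivisorsOfPrimePowerMultiple.

Lemma unitary_div_unit z x : eis_unit z -> unitary_div x z <-> x = eis1.
Proof.
move=> zU; split=> [[_ [xA [y [zE _]]]] | ->].
  have xU : eis_unit x by apply: (eis_unit_dvd zU); exists y.
  by apply: (inA_unit_eq1 (x := eis1)) xU _; rewrite ?eis_mulr1.
split; [by [] | split; [by [] | exists z; split; first by rewrite eis_mul1]].
by move=> d d1 _; apply: eis_unit_dvd eis_unit1 d1.
Qed.

Lemma delta2_star_unit z : eis_unit z -> delta2_star z = 1.
Proof.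
move=> zU; have NzK : eis_norm z <= 1%:Z by rewrite (eis_unitP z).1.
rewrite (delta2_starE (eis_unit_neq0 zU) NzK) (eq_bigl (pred1 eis1)).
  by rewrite /box /index_iota /= !big_cons big_nil.
by move=> x; apply/is_unitary_divP/eqP; rewrite (unitary_div_unit x zU).
Qed.

Lemma Euclid_dvdzM (p : nat) m n : prime p ->
  (p %| m * n)%Z = (p %| m)%Z || (p %| n)%Z.
Proof. by move=> pP; rewrite !dvdzE abszM Euclid_dvdM. Qed.

Lemma dvdz3_sqr_add1 (s : int) : ~~ (3 %| s ^+ 2 + 1)%Z.
Proof.
apply/negP => /dvdzP [k sE]; have := divz_eq s 3.
have := modz_ge0 s (isT : (3 : int) != 0); have := ltz_pmod s (isT : (0 : int) < 3).
move: (s %/ 3)%Z (s %% 3)%Z => u r r_lt3 r_ge0 s_eq; rewrite {}s_eq in sE.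
have : r = 0 \/ r = 1 \/ r = 2 by lia.
by case=> [|[|]] r_eq; rewrite r_eq in sE; nia.
Qed.

(* 4 (1 + a^2 + ab + b^2) = (2a + b)^2 + 1 + 3 (1 + b^2) *)
Lemma dvdz3_norm_add1 x : ~~ (3 %| 1 + eis_norm x)%Z.
Proof.
case: x => a b; apply: contra (dvdz3_sqr_add1 (2 * a + b)) => /dvdzP [k Nk].
by apply/dvdzP; exists (4 * k - 1 - b ^+ 2); move: Nk; rewrite /eis_norm /=; lia.
Qed.

Lemma delta2_star_ndvd3 z : z <> eis0 -> ~~ (3 %| delta2_star z)%Z.
Proof.
elim/eis_norm_ind: z => z IH z0.
have [zU | zNU] := classic (eis_unit z); first by rewrite delta2_star_unit.
have [p pP pz] := eis_prime_dvd_exists z0 zNU.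
have [e [w [e_gt0 zE npw]]] := eis_prime_power_split pP z0 pz.
have w0 : w <> eis0 by move=> w0; apply: npw; rewrite w0; apply: eis_dvd0.
have qNU : ~ eis_unit (eis_exp p e).
  by move=> qU; apply: (eis_prime_nonunit pP (eis_unit_dvd qU (eis_dvd_exp p e_gt0))).
have Nw : eis_norm w < eis_norm z.
  have := eis_norm_nonunit (eis_exp_neq0 (eis_prime_neq0 pP)) qNU.
  by have := eis_norm_gt0 w0; rewrite zE eis_normM; nia.
rewrite zE delta2_star_mul_prime_power // Euclid_dvdzM //.
by rewrite negb_or IH // dvdz3_norm_add1.
Qed.

Theorem corollary2p2 (t : nat) :
  (0 < t)%N -> (3 %| t)%N ->
  ~ exists z : eis, z <> eis0 /\ I2_star z = t%:R.
Proof.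
move=> _ t3 [z [z0 Iz]].
have Nz0 : (eis_norm z)%:~R != 0 :> rat by rewrite intr_eq0; apply/eqP => /eis_norm_eq0.
have deltaE : delta2_star z = t%:Z * eis_norm z.
  by apply/eqP; rewrite -(eqr_int rat) intrM -[(t%:Z)%:~R]/(t%:R) -Iz /I2_star divfK.
by move: (delta2_star_ndvd3 z0); rewrite deltaE dvdz_mulr // dvdzE.
Qed.
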